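(* There is no finitely generated partially commutative group $G$ with $\mathrm{cdim}(G)=3$.
   Context: A finitely generated partially commutative group is a group $G(\Gamma)=\langle X\mid [a,b]=1 \text{ whenever } a,b \text{ are joined by an edge of }\Gamma\rangle$ for a finite simple undirected graph $\Gamma$ with vertex set $X$, where $[a,b]=a^{-1}b^{-1}ab$. The centraliser dimension $\mathrm{cdim}(H)$ of a group $H$ is the maximal length $k$ of a chain $C_0>C_1>\cdots>C_k$ (strict inclusions) of centralisers of subsets of $H$. *)

From mathcomp Require Import all_boot.
Set Implicit Arguments. Unset Strict Implicit. Unset Printing Implicit Defensive.

(* Partially commutative group G(Gamma) for a graph Gamma = (T, e):
   elements are equivalence classes of words over the letters x^{+1}, x^{-1}
   (x : T; the boolean flag true means inverse); the product is concatenation. *)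
Definition letter (T : finType) := (T * bool)%type.
Definition word (T : finType) := seq (letter T).

Inductive raag_eq (T : finType) (e : rel T) : word T -> word T -> Prop :=
| raag_refl w : raag_eq e w w
| raag_sym w1 w2 : raag_eq e w1 w2 -> raag_eq e w2 w1
| raag_trans w1 w2 w3 : raag_eq e w1 w2 -> raag_eq e w2 w3 -> raag_eq e w1 w3
| raag_cancel (u v : word T) (a : T) (b : bool) :
    raag_eq e (u ++ [:: (a, b); (a, ~~ b)] ++ v) (u ++ v)
| raag_comm (u v : word T) (a c : T) (b1 b2 : bool) :
    e a c ->
    raag_eq e (u ++ [:: (a, b1); (c, b2)] ++ v) (u ++ [:: (c, b2); (a, b1)] ++ v).

Definition centraliser (T : finType) (e : rel T) (S : word T -> Prop) :
  word T -> Prop :=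
  fun w => forall s, S s -> raag_eq e (w ++ s) (s ++ w).

Definition has_cent_chain (T : finType) (e : rel T) (k : nat) : Prop :=
  exists S : nat -> (word T -> Prop),
    forall i, i < k ->
      (forall w, centraliser e (S i.+1) w -> centraliser e (S i) w) /\
      (exists w, centraliser e (S i) w /\ ~ centraliser e (S i.+1) w).

Definition cdim_eq (T : finType) (e : rel T) (d : nat) : Prop :=
  has_cent_chain e d /\ (forall k, has_cent_chain e k -> k <= d).

(* If a non-central vertex v has two distinct, non-adjacent neighbours u and w,
   pick a vertex d distinct from and non-adjacent to v: the centralisers of
   {}, {v}, {v,u}, {v,u,w}, {v,u,w,d} form a strict chain of length 4.
   Otherwise "equal or adjacent" is an equivalence relation on the non-central
   vertices, and G(Gamma) is commutation-transitive (two elements commuting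
   with a non-central element commute with each other), which rules out strict
   chains of length 3.  Commutation-transitivity is read off a representation
   in 2x2 matrices over Z[X]: central generators act trivially, and the k-th
   vertex, lying in the clique with index c, acts by 1 + t N_c with
   N_c = [[c, -c^2], [1, -c]] and t = X^(k+1).  A ping-pong argument on degrees
   shows that a word acting trivially, with zero exponent sums at the central
   vertices, is trivial; and centralisers of non-scalar 2x2 matrices over a
   domain are commutative. *)

From HB Require Import structures.
From mathcomp Require Import all_boot all_algebra.
From mathcomp Require Import ring zify.
From Stdlib Require Import Classical.
Set Implicit Arguments. Unset Strict Implicit. Unset Printing Implicit Defensive.
Import GRing.Theory Num.Theory.

Definition gen (T : finType) (a : T) : word T := [:: (a, false)].

Section WordCongruence.
Variables (T : finType) (e : rel T).
Local Notation req := (raag_eq e).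

Definition adjeq (a b : T) := (a == b) || e a b.

Definition wcommute (x y : word T) := req (x ++ y) (y ++ x).

Definition central (v : T) := [forall u, adjeq v u].

Lemma adjeq_sym : symmetric e -> symmetric adjeq.
Proof. by move=> e_sym a b; rewrite /adjeq eq_sym e_sym. Qed.

Lemma req_ctx p q w1 w2 : req w1 w2 -> req (p ++ w1 ++ q) (p ++ w2 ++ q).
Proof.
elim=> {w1 w2} [w|w1 w2 _ IH|w1 w2 w3 _ IH1 _ IH2|u v a b|u v a c b1 b2 Hac].
- exact: raag_refl.
- exact: raag_sym.
- exact: raag_trans IH1 IH2.
- by have := raag_cancel e (p ++ u) (v ++ q) a b; rewrite -!catA.
- by have := raag_comm (p ++ u) (v ++ q) b1 b2 Hac; rewrite -!catA.
Qed.

Lemma req_catl p w1 w2 : req w1 w2 -> req (p ++ w1) (p ++ w2).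
Proof. by move/(req_ctx p [::]); rewrite !cats0. Qed.

Lemma req_catr q w1 w2 : req w1 w2 -> req (w1 ++ q) (w2 ++ q).
Proof. exact: req_ctx [::] q w1 w2. Qed.

Lemma req_swap p q (l1 l2 : letter T) :
  adjeq l1.1 l2.1 -> req (p ++ l1 :: l2 :: q) (p ++ l2 :: l1 :: q).
Proof.
case: l1 l2 => [a1 b1] [a2 b2]; rewrite /adjeq /= => /orP[/eqP<- | Hadj].
- case: (eqVneq b1 b2) => [<- | /negPf Hb]; first exact: raag_refl.
  have -> : b2 = ~~ b1 by case: b1 b2 Hb => [] [].
  apply: raag_trans (raag_cancel e p q a1 b1) _; apply: raag_sym.
  by have := raag_cancel e p q a1 (~~ b1); rewrite negbK.
- exact: (raag_comm p q b1 b2 Hadj).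
Qed.

Lemma req_move p u (l : letter T) q :
  all (fun x => adjeq x.1 l.1) u -> req (p ++ u ++ l :: q) (p ++ l :: u ++ q).
Proof.
elim: u p => [|x u IH] p /=; first by move=> _; exact: raag_refl.
case/andP=> Hx Hu; apply: raag_trans (req_swap p _ Hx).
by have := IH (rcons p x) Hu; rewrite -cats1 -!catA.
Qed.

Lemma wcommute_gen a b : adjeq a b -> wcommute (gen a) (gen b).
Proof. exact: req_swap [::] [::] (a, false) (b, false). Qed.

Definition flip (l : letter T) : letter T := (l.1, ~~ l.2).
Definition winv (w : word T) : word T := rev (map flip w).

Lemma winv_cons l w : winv (l :: w) = winv w ++ [:: flip l].
Proof. by rewrite /winv /= rev_cons cats1. Qed.

Lemma req_mulwV w : req (w ++ winv w) [::].
Proof.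
elim: w => [|[a b] w IH] /=; first exact: raag_refl.
rewrite winv_cons catA; apply: raag_trans (req_ctx [:: (a, b)] [:: (a, ~~ b)] IH) _.
exact: raag_cancel e [::] [::] a b.
Qed.

Lemma req_mulVw w : req (winv w ++ w) [::].
Proof.
elim: w => [|[a b] w IH] /=; first exact: raag_refl.
rewrite winv_cons -catA /=; apply: raag_trans _ IH.
by have := raag_cancel e (winv w) w a (~~ b); rewrite negbK.
Qed.

Lemma wcommute_of_commutator x y :
  req (x ++ y ++ winv x ++ winv y) [::] -> wcommute x y.
Proof.
move=> /(req_catr (y ++ x)) /= H; apply: raag_trans H; apply: raag_sym.
have := req_ctx (x ++ y ++ winv x) x (req_mulVw y); rewrite -!catA /= => H.
apply: raag_trans H _.
by have := req_ctx (x ++ y) [::] (req_mulVw x); rewrite !cats0 -!catA.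
Qed.

End WordCongruence.

Section WordEvaluation.
Variables (T : finType) (e : rel T) (M : Type) (idx : M) (op : Monoid.law idx).
Variable f : letter T -> M.
Hypothesis f_cancel : forall a b, op (f (a, b)) (f (a, ~~ b)) = idx.
Hypothesis f_comm : forall a c b1 b2, e a c ->
  op (f (a, b1)) (f (c, b2)) = op (f (c, b2)) (f (a, b1)).

Lemma big_raag_eq w1 w2 : raag_eq e w1 w2 ->
  \big[op/idx]_(l <- w1) f l = \big[op/idx]_(l <- w2) f l.
Proof.
elim=> {w1 w2} [//|//|w1 w2 w3 _ -> _ -> //|u v a b|u v a c b1 b2 Hac].
- by rewrite !big_cat !big_cons big_nil Monoid.mulm1 f_cancel Monoid.mul1m.
- by rewrite !big_cat !big_cons big_nil !Monoid.mulm1 f_comm.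
Qed.

End WordEvaluation.

Section Matrix2.
Local Open Scope ring_scope.
Variable R : comPzRingType.

Definition mat2 := (R * R * R * R)%type.

Definition mmul (x y : mat2) : mat2 :=
  let: (a, b, c, d) := x in let: (a', b', c', d') := y in
  (a * a' + b * c', a * b' + b * d', c * a' + d * c', c * b' + d * d').

Definition mI : mat2 := (1, 0, 0, 1).

Lemma mmulA : associative mmul.
Proof.
case=> [[[a b] c] d] [[[a1 b1] c1] d1] [[[a2 b2] c2] d2] /=.
congr (_, _, _, _); ring.
Qed.

Lemma mmul1m : left_id mI mmul.
Proof. by case=> [[[a b] c] d] /=; congr (_, _, _, _); ring. Qed.

Lemma mmulm1 : right_id mI mmul.
Proof. by case=> [[[a b] c] d] /=; congr (_, _, _, _); ring. Qed.

HB.instance Definition _ := Monoid.isLaw.Build mat2 mI mmul mmulA mmul1m mmulm1.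

Definition traceless (x : mat2) : R * R * R := let: (a, b, c, d) := x in (b, c, a - d).

Definition parallel (u w : R * R * R) : Prop :=
  let: (u1, u2, u3) := u in let: (w1, w2, w3) := w in
  [/\ u1 * w2 - u2 * w1 = 0, u1 * w3 - u3 * w1 = 0 & u2 * w3 - u3 * w2 = 0].

Lemma mmulC_parallel x y : mmul x y = mmul y x <-> parallel (traceless x) (traceless y).
Proof.
case: x y => [[[p q] r] s] [[[a b] c] d] /=; split.
- case=> E1 E2 E3 _; split.
  + by transitivity ((p * a + q * c) - (a * p + b * r)); [ring | rewrite E1 subrr].
  + by transitivity ((a * q + b * s) - (p * b + q * d)); [ring | rewrite E2 subrr].
  + by transitivity ((r * a + s * c) - (c * p + d * r)); [ring | rewrite E3 subrr].
- case=> X1 X2 X3; congr (_, _, _, _); apply: subr0_eq.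
  + by transitivity (q * c - r * b); [ring | exact: X1].
  + by transitivity (- (q * (a - d) - (p - s) * b)); [ring | rewrite X2 oppr0].
  + by transitivity (r * (a - d) - (p - s) * c); [ring | exact: X3].
  + by transitivity (- (q * c - r * b)); [ring | rewrite X1 oppr0].
Qed.

End Matrix2.

Arguments mmul {R}.
Arguments mI {R}.

Section Matrix2Domain.
Local Open Scope ring_scope.
Variable R : idomainType.

Lemma parallel_trans (u v w : R * R * R) :
  w != (0, 0, 0) -> parallel u w -> parallel v w -> parallel u v.
Proof.
case: u v w => [[u1 u2] u3] [[v1 v2] v3] [[w1 w2] w3] Hw [X1 X2 X3] [Y1 Y2 Y3].
have {Hw} : [|| w1 != 0, w2 != 0 | w3 != 0].
  by apply: contraNT Hw; rewrite !negb_or !negbK => /and3P[/eqP-> /eqP-> /eqP->].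
case/or3P => Hk.
- have M1 : u1 * v2 - u2 * v1 = 0.
    apply: (mulfI Hk); rewrite mulr0.
    transitivity (- u1 * (v1 * w2 - v2 * w1) + v1 * (u1 * w2 - u2 * w1)); first ring.
    by rewrite X1 Y1; ring.
  split => //; apply: (mulfI Hk); rewrite mulr0.
  + transitivity (- u1 * (v1 * w3 - v3 * w1) + v1 * (u1 * w3 - u3 * w1)); first ring.
    by rewrite X2 Y2; ring.
  + transitivity (- w3 * (u1 * v2 - u2 * v1) - u2 * (v1 * w3 - v3 * w1)
                  + v2 * (u1 * w3 - u3 * w1)); first ring.
    by rewrite M1 X2 Y2; ring.
- have M1 : u1 * v2 - u2 * v1 = 0.
    apply: (mulfI Hk); rewrite mulr0.
    transitivity (v2 * (u1 * w2 - u2 * w1) - u2 * (v1 * w2 - v2 * w1)); first ring.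
    by rewrite X1 Y1; ring.
  split => //; apply: (mulfI Hk); rewrite mulr0.
  + transitivity (w3 * (u1 * v2 - u2 * v1) - u1 * (v2 * w3 - v3 * w2)
                  + v1 * (u2 * w3 - u3 * w2)); first ring.
    by rewrite M1 X3 Y3; ring.
  + transitivity (- u2 * (v2 * w3 - v3 * w2) + v2 * (u2 * w3 - u3 * w2)); first ring.
    by rewrite X3 Y3; ring.
- split; apply: (mulfI Hk); rewrite mulr0.
  + transitivity (u1 * (v2 * w3 - v3 * w2) - u2 * (v1 * w3 - v3 * w1)
                  + v3 * (u1 * w2 - u2 * w1)); first ring.
    by rewrite X1 Y2 Y3; ring.
  + transitivity (v3 * (u1 * w3 - u3 * w1) - u3 * (v1 * w3 - v3 * w1)); first ring.
    by rewrite X2 Y2; ring.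
  + transitivity (v3 * (u2 * w3 - u3 * w2) - u3 * (v2 * w3 - v3 * w2)); first ring.
    by rewrite X3 Y3; ring.
Qed.

Lemma mmul_commute_trans (x y z : mat2 R) : (exists m, mmul y m <> mmul m y) ->
  mmul x y = mmul y x -> mmul z y = mmul y z -> mmul x z = mmul z x.
Proof.
case=> m Hym /mmulC_parallel Hxy /mmulC_parallel Hzy; apply/mmulC_parallel.
apply: parallel_trans Hxy Hzy; apply/eqP => Hy0; apply: Hym; apply/mmulC_parallel.
by rewrite Hy0; case: (traceless m) => [[? ?] ?] /=; split; ring.
Qed.

End Matrix2Domain.

Section ExponentSums.
Local Open Scope ring_scope.
Variables (T : finType) (e : rel T).
Local Notation req := (raag_eq e).

Definition sgn (b : bool) : int := if b then -1 else 1.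

Definition expsum (v : T) (w : word T) : int :=
  \sum_(l <- w) (if l.1 == v then sgn l.2 else 0).

Lemma expsum_cons v l w :
  expsum v (l :: w) = (if l.1 == v then sgn l.2 else 0) + expsum v w.
Proof. by rewrite /expsum big_cons. Qed.

Lemma expsum_cat v u w : expsum v (u ++ w) = expsum v u + expsum v w.
Proof. by rewrite /expsum big_cat. Qed.

Lemma expsum_nil v : expsum v [::] = 0.
Proof. by rewrite /expsum big_nil. Qed.

Lemma sgnN b : sgn (~~ b) = - sgn b.
Proof. by case: b. Qed.

Lemma sgnK b : sgn b * sgn b = 1.
Proof. by case: b. Qed.

Lemma expsum_winv v w : expsum v (winv w) = - expsum v w.
Proof.
elim: w => [|l w IH]; first by rewrite /winv /= expsum_nil oppr0.
rewrite winv_cons expsum_cat IH !expsum_cons expsum_nil /flip /= sgnN.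
by case: (l.1 == v); ring.
Qed.

Lemma expsum_sign_ge0 a b w : (a, ~~ b) \notin w -> 0 <= sgn b * expsum a w.
Proof.
elim: w => [|[a' b'] w IH]; first by rewrite expsum_nil mulr0.
rewrite in_cons negb_or expsum_cons mulrDr /= => /andP[Hl Hw].
apply: addr_ge0 (IH Hw); case: eqP => [Ea|_]; last by rewrite mulr0.
have -> : b' = b by move: Hl; rewrite Ea xpair_eqE eqxx /=; case: (b) (b') => [] [].
by rewrite sgnK.
Qed.

(* Each letter is moved next to an occurrence of its inverse and cancelled. *)
Lemma req_nil_of_commuting (w : word T) :
  (forall l1 l2, l1 \in w -> l2 \in w -> adjeq e l1.1 l2.1) ->
  (forall v, expsum v w = 0) -> req w [::].
Proof.
have [n] := ubnP (size w); elim: n w => // n IH [|[a b] w] /= Hn Hadj Hsum.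
  exact: raag_refl.
have Hin : (a, ~~ b) \in w.
  apply/negPn/negP => /expsum_sign_ge0.
  have /eqP := Hsum a; rewrite expsum_cons eqxx addrC addr_eq0 => /eqP->.
  by rewrite mulrN sgnK.
case/splitPr: Hin Hn Hadj Hsum => p q Hn Hadj Hsum.
have Hmove : req ((a, b) :: p ++ (a, ~~ b) :: q) ((a, b) :: (a, ~~ b) :: p ++ q).
  apply: (req_move [:: (a, b)]); apply/allP => x Hx.
  by apply: Hadj; rewrite !(inE, mem_cat) ?Hx ?eqxx ?orbT.
apply: raag_trans Hmove _; apply: raag_trans (raag_cancel e [::] (p ++ q) a b) _.
apply: IH; first by move: Hn; rewrite !size_cat /=; lia.
- have sub : {subset p ++ q <= (a, b) :: p ++ (a, ~~ b) :: q}.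
    by move=> l; rewrite !(inE, mem_cat) => /orP[]->; rewrite ?orbT.
  by move=> l1 l2 /sub H1 /sub H2; apply: Hadj.
- move=> v; have := Hsum v.
  rewrite !(expsum_cons, expsum_cat) expsum_nil /= sgnN; case: (a == v); lia.
Qed.

End ExponentSums.

Section NonAdjacentGenerators.
Local Open Scope ring_scope.
Variables (T : finType) (e : rel T).
Hypotheses (e_sym : symmetric e) (e_irr : irreflexive e).
Variables x y : T.
Hypothesis xy_nadj : ~~ adjeq e x y.

Definition gen_mx (l : letter T) : mat2 int :=
  if l.1 == x then (if l.2 then (1, -1, 0, 1) else (1, 1, 0, 1))
  else if l.1 == y then (if l.2 then (1, 0, -1, 1) else (1, 0, 1, 1)) else mI.

Lemma gen_mx_cancel a b : mmul (gen_mx (a, b)) (gen_mx (a, ~~ b)) = mI.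
Proof.
rewrite /gen_mx /=; case: (a == x); last case: (a == y); try by rewrite mmul1m.
all: by case: b.
Qed.

Lemma gen_mx_comm a c b1 b2 : e a c ->
  mmul (gen_mx (a, b1)) (gen_mx (c, b2)) = mmul (gen_mx (c, b2)) (gen_mx (a, b1)).
Proof.
have Hexy : ~~ e x y by apply: contra xy_nadj => Hxy; rewrite /adjeq Hxy orbT.
have Hout u w : e u w -> u \in [:: x; y] -> w \notin [:: x; y].
  move=> Huw Hu; apply/negP => Hw; move: Hu Hw Huw; rewrite !inE.
  case/orP=> /eqP-> /orP[] /eqP->; rewrite ?e_irr ?(negPf Hexy) //.
  by rewrite e_sym (negPf Hexy).
have Hid w b : w \notin [:: x; y] -> gen_mx (w, b) = mI.
  by rewrite !inE negb_or /gen_mx /= => /andP[/negPf-> /negPf->].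
move=> Hac; case: (boolP (a \in [:: x; y])) => Ha.
  by rewrite (Hid c) ?(Hout a) // mmul1m mmulm1.
case: (boolP (c \in [:: x; y])) => Hc.
  by rewrite (Hid a) ?(Hout c) // 1?e_sym // mmul1m mmulm1.
by rewrite !Hid // mmul1m.
Qed.

Lemma gen_not_wcommute : ~ wcommute e (gen x) (gen y).
Proof.
move/(big_raag_eq gen_mx_cancel gen_mx_comm); rewrite !big_cons !big_nil.
have Hyx : y != x.
  by rewrite eq_sym; apply: contraNneq xy_nadj => ->; rewrite /adjeq eqxx.
by rewrite /gen_mx /= eqxx (negPf Hyx) eqxx !mmulm1.
Qed.

End NonAdjacentGenerators.

Definition noncentral_transitive (T : finType) (e : rel T) :=
  forall u v w, ~~ central e v -> e u v -> e v w -> adjeq e u w.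

Definition comm_transitive (T : finType) (e : rel T) :=
  forall x y z, (exists w, ~ wcommute e y w) ->
    wcommute e x y -> wcommute e z y -> wcommute e x z.

Lemma noncentral_transitive_or_path (T : finType) (e : rel T) :
  noncentral_transitive e \/
  exists u v w d, [/\ e u v, e v w, ~~ adjeq e u w & ~~ adjeq e v d].
Proof.
case: (boolP [exists u, exists v, exists w,
                [&& ~~ central e v, e u v, e v w & ~~ adjeq e u w]]).
- case/existsP=> u /existsP[v /existsP[w /and4P[/forallPn[d Hd] Huv Hvw Huw]]].
  by right; exists u, v, w, d.
- move/negP=> Hno; left => u v w Hv Huv Hvw; apply/negPn/negP => Huw; apply: Hno.
  apply/existsP; exists u; apply/existsP; exists v; apply/existsP; exists w.
  exact/and4P.
Qed.

Section CommutationTransitive.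
Local Open Scope ring_scope.
Variables (T : finType) (e : rel T).
Hypothesis e_sym : symmetric e.
Hypothesis e_trans : noncentral_transitive e.
Local Notation req := (raag_eq e).
Local Notation central := (central e).
Local Notation adjeq := (adjeq e).

Lemma adjeq_trans v u w : ~~ central v -> adjeq u v -> adjeq v w -> adjeq u w.
Proof.
move=> Hv; rewrite /adjeq => /orP[/eqP-> // | Huv] /orP[/eqP<- | Hvw].
- by rewrite Huv orbT.
- exact: e_trans Hv Huv Hvw.
Qed.

Definition clique_rep (a : T) : T := odflt a [pick u | ~~ central u && adjeq u a].

Lemma clique_repP a :
  ~~ central a -> ~~ central (clique_rep a) && adjeq (clique_rep a) a.
Proof.
by move=> Ha; rewrite /clique_rep; case: pickP => [u -> //|_]; rewrite Ha /adjeq eqxx.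
Qed.

Lemma clique_rep_eq a c : ~~ central a -> ~~ central c ->
  (clique_rep a == clique_rep c) = adjeq a c.
Proof.
move=> Ha Hc; apply/eqP/idP => [E | Hac].
  have /andP[Hr Hra] := clique_repP Ha; have /andP[_] := clique_repP Hc; rewrite -E.
  by apply: adjeq_trans Hr _; rewrite (adjeq_sym e_sym).
rewrite /clique_rep (eq_pick (_ : _ =1 [pred u | ~~ central u && adjeq u c])).
  by case: pickP => // /(_ c); rewrite /= Hc /adjeq eqxx.
move=> u /=; case: (boolP (central u)) => //= Hu; apply/idP/idP => Hu'.
- exact: adjeq_trans Ha Hu' Hac.
- by apply: adjeq_trans Hc Hu' _; rewrite (adjeq_sym e_sym).
Qed.

Definition clique_id (a : T) : int := Posz (enum_rank (clique_rep a)).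

Lemma clique_id_eq a c : ~~ central a -> ~~ central c ->
  (clique_id a == clique_id c) = adjeq a c.
Proof.
by move=> Ha Hc; rewrite eqz_nat val_eqE (inj_eq enum_rank_inj) clique_rep_eq.
Qed.

(* [N_c = [[c, -c^2], [1, -c]]] squares to 0, so [t |-> 1 + t N_c] is additive. *)
Definition umx (c : int) (t : {poly int}) : mat2 {poly int} :=
  (1 + c%:P * t, - (c%:P * c%:P * t), t, 1 - c%:P * t).

Lemma umxD c (t s : {poly int}) : mmul (umx c t) (umx c s) = umx c (t + s).
Proof. by rewrite /mmul /umx; congr (_, _, _, _); ring. Qed.

Lemma umx0 c : umx c 0 = mI.
Proof. by rewrite /umx /mI; congr (_, _, _, _); ring. Qed.

Definition letter_poly (l : letter T) : {poly int} :=
  (sgn l.2)%:P * 'X^((enum_rank l.1).+1).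

Definition rep_letter (l : letter T) : mat2 {poly int} :=
  if central l.1 then mI else umx (clique_id l.1) (letter_poly l).

Definition rep (w : word T) : mat2 {poly int} := \big[mmul/mI]_(l <- w) rep_letter l.

Lemma rep_cat u w : rep (u ++ w) = mmul (rep u) (rep w).
Proof. exact: big_cat. Qed.

Lemma rep_letter_cancel a b : mmul (rep_letter (a, b)) (rep_letter (a, ~~ b)) = mI.
Proof.
rewrite /rep_letter /=; case: ifP => _; first exact: mmul1m.
by rewrite umxD /letter_poly /= sgnN polyCN mulNr addrN umx0.
Qed.

Lemma rep_letter_comm a c b1 b2 : e a c ->
  mmul (rep_letter (a, b1)) (rep_letter (c, b2)) =
  mmul (rep_letter (c, b2)) (rep_letter (a, b1)).
Proof.
move=> Hac; rewrite /rep_letter /=.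
case: ifP => Ha; first by rewrite mmul1m mmulm1.
case: ifP => Hc; first by rewrite mmul1m mmulm1.
have /eqP-> : clique_id a == clique_id c.
  by rewrite clique_id_eq ?negbT // /adjeq Hac orbT.
by rewrite !umxD addrC.
Qed.

Lemma rep_req w1 w2 : req w1 w2 -> rep w1 = rep w2.
Proof. exact: (big_raag_eq rep_letter_cancel rep_letter_comm). Qed.

Definition word_poly (w : word T) : {poly int} := \sum_(l <- w) letter_poly l.

Lemma coef_word_poly w v : (word_poly w)`_(enum_rank v).+1 = expsum v w.
Proof.
rewrite /word_poly /expsum coef_sum; apply: eq_bigr => l _.
rewrite /letter_poly coefCM coefXn eqSS val_eqE (inj_eq enum_rank_inj) eq_sym.
by case: (l.1 == v); rewrite ?mulr1 ?mulr0.
Qed.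

Lemma coef0_word_poly w : (word_poly w)`_0 = 0.
Proof.
by rewrite /word_poly coef_sum big1 // => l _; rewrite /letter_poly coefCM coefXn mulr0.
Qed.

Definition block (c : int) (b : word T) :=
  all (fun l => ~~ central l.1 && (clique_id l.1 == c)) b.

Lemma rep_block c b : block c b -> rep b = umx c (word_poly b).
Proof.
elim: b => [|l b IH]; first by rewrite /rep /word_poly !big_nil umx0.
case/andP=> /andP[Hl /eqP Ec] /IH Hb.
by rewrite /rep /word_poly !big_cons -/(rep b) Hb /rep_letter (negPf Hl) Ec umxD.
Qed.

Lemma req_nil_block c b : block c b -> word_poly b = 0 -> req b [::].
Proof.
move=> Hb Hp; apply: req_nil_of_commuting => [l1 l2 H1 H2 | v].
- have /andP[Hc1 /eqP E1] := allP Hb l1 H1; have /andP[Hc2 /eqP E2] := allP Hb l2 H2.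
  by rewrite -clique_id_eq // E1 E2.
- by rewrite -coef_word_poly Hp coef0.
Qed.

Definition mact (x : mat2 {poly int}) (v : {poly int} * {poly int}) :=
  let: (a, b, c, d) := x in let: (P, Q) := v in (a * P + b * Q, c * P + d * Q).

Lemma mact_mul x y v : mact (mmul x y) v = mact x (mact y v).
Proof.
case: x y v => [[[a b] c] d] [[[a' b'] c'] d'] [P Q].
by rewrite /mact /mmul; congr (_, _); ring.
Qed.

(* Viewing [(P, Q)] as the point P/Q of the projective line over Q(X), [near c]
   says that P/Q - c has negative degree: the point is X-adically close to the
   fixed point [c] of the matrices [umx c t]. *)
Definition near (c : int) (v : {poly int} * {poly int}) :=
  let: (P, Q) := v in (size (P - c%:P * Q)%R < size Q)%N.

Definition away (c : int) (v : {poly int} * {poly int}) :=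
  let: (P, Q) := v in (P - c%:P * Q != 0) && (size Q <= size (P - c%:P * Q)%R)%N.

Lemma near_umx c (t : {poly int}) v :
  (1 < size t)%N -> away c v -> near c (mact (umx c t) v).
Proof.
case: v => P Q Ht /andP[HD HQ]; rewrite /near /mact /umx.
have -> : (1 + c%:P * t) * P + - (c%:P * c%:P * t) * Q
          - c%:P * (t * P + (1 - c%:P * t) * Q) = P - c%:P * Q by ring.
have -> : t * P + (1 - c%:P * t) * Q = t * (P - c%:P * Q) + Q by ring.
move: HD HQ; set D := P - c%:P * Q => HD HQ; clearbody D.
have t0 : t != 0 by rewrite -size_poly_eq0; case: (size t) Ht.
have HtD := size_mul t0 HD.
rewrite size_polyDl HtD; move: Ht; case: (size t) => [|[|k]] // _; rewrite !addSn ltnS.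
- exact: leq_addl.
- exact: leq_trans HQ (leq_addl _ _).
Qed.

Lemma away_near c c' v : c != c' -> near c v -> away c' v.
Proof.
case: v => P Q; rewrite /near /away => Hcc HR.
have Hs : size ((c - c')%:P * Q) = size Q by rewrite size_Cmul // subr_eq0.
have HD : size (P - c'%:P * Q) = size Q.
  have -> : P - c'%:P * Q = (c - c')%:P * Q + (P - c%:P * Q) by rewrite polyCB; ring.
  by rewrite size_polyDl Hs.
by rewrite HD leqnn andbT -size_poly_eq0 HD -lt0n (leq_ltn_trans _ HR).
Qed.

Inductive reduced : option int -> word T -> Prop :=
| reduced_nil : reduced None [::]
| reduced_cat c o b w : block c b -> word_poly b != 0 -> reduced o w ->
    o != Some c -> reduced (Some c) (b ++ w).

Lemma reduced_None w : reduced None w -> w = [::].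
Proof. by move E: None => o Hr; case: Hr E. Qed.

Lemma reduced_exists w : all (fun l => ~~ central l.1) w ->
  exists o h, req w h /\ reduced o h.
Proof.
elim: w => [|l w IH] /=.
  by exists None, [::]; split; [exact: raag_refl | exact: reduced_nil].
case/andP=> Hl /IH[o [h [Hwh Hr]]].
have Hlh : req (l :: w) (l :: h) by exact: (req_catl [:: l] Hwh).
have Hbl : block (clique_id l.1) [:: l] by rewrite /block /= Hl eqxx.
have Hpl : word_poly [:: l] != 0.
  apply/eqP => /(congr1 (fun p : {poly int} => p`_(enum_rank l.1).+1)).
  by rewrite coef_word_poly coef0 expsum_cons expsum_nil eqxx addr0; case: l.2.
case: Hr Hwh Hlh => [|c o' b w1 Hb Hpb Hr1 Ho'] Hwh Hlh.
  exists (Some (clique_id l.1)), [:: l]; split => //.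
  exact: (reduced_cat Hbl Hpl reduced_nil).
case: (eqVneq (clique_id l.1) c) => [Ec | Hne].
- have Hlb : block c (l :: b) by rewrite /block /= Hl Ec eqxx.
  case: (eqVneq (word_poly (l :: b)) 0) => [H0 | H0].
  + exists o', w1; split => //; apply: raag_trans Hlh _.
    exact: req_catr (req_nil_block Hlb H0).
  + exists (Some c), ((l :: b) ++ w1); split => //.
    exact: (reduced_cat Hlb H0 Hr1 Ho').
- exists (Some (clique_id l.1)), ([:: l] ++ (b ++ w1)); split => //.
  by apply: reduced_cat Hbl Hpl (reduced_cat Hb Hpb Hr1 Ho') _; rewrite eq_sym.
Qed.

Lemma reduced_pingpong c h : reduced (Some c) h ->
  exists c', forall v, away c' v -> near c (mact (rep h) v).
Proof.
move E: (Some c) => oc Hr; elim: Hr c E => // c0 o b w Hb Hpb Hr IH Ho c [->].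
have Hsize : (1 < size (word_poly b))%N.
  rewrite ltnNge; apply: contra Hpb => /size1_polyC->; by rewrite coef0_word_poly.
rewrite rep_cat (rep_block Hb); case: o Ho Hr IH => [c1 | ] Ho Hr IH.
- have [c' Hc'] := IH c1 erefl; exists c' => v /Hc' Hv.
  by rewrite mact_mul; apply: near_umx Hsize (away_near Ho Hv).
- exists c0 => v Hv; rewrite (reduced_None Hr) /rep big_nil mmulm1.
  exact: near_umx.
Qed.

Definition noncentral_part (w : word T) := filter (fun l => ~~ central l.1) w.
Definition central_part (w : word T) := filter (fun l => central l.1) w.

Lemma req_central_part w : req w (noncentral_part w ++ central_part w).
Proof.
elim: w => [|l w IH]; first exact: raag_refl.
rewrite /noncentral_part /central_part /=; case: (boolP (central l.1)) => Hl /=.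
- apply: raag_trans (req_catl [:: l] IH) _; apply: raag_sym.
  apply: (req_move [::]); apply/allP => x _; rewrite (adjeq_sym e_sym).
  exact: (forallP Hl).
- exact: (req_catl [:: l] IH).
Qed.

Lemma rep_noncentral_part w : rep (noncentral_part w) = rep w.
Proof.
elim: w => [|l w IH] //; rewrite /noncentral_part /=.
case: (boolP (central l.1)) => Hl; rewrite /rep !big_cons -!/(rep _).
- by rewrite -IH /rep_letter Hl mmul1m.
- by rewrite -/(noncentral_part w) IH.
Qed.

Lemma expsum_central_part v w :
  expsum v (central_part w) = if central v then expsum v w else 0.
Proof.
elim: w => [|l w IH]; first by rewrite /central_part /= expsum_nil; case: ifP.
rewrite /central_part /=; case: (boolP (central l.1)) => Hl;
  rewrite ?expsum_cons -/(central_part w) IH.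
- by case: (eqVneq l.1 v) => [<-|]; [rewrite Hl | case: ifP].
- case: (eqVneq l.1 v) => [Ev|]; last by case: ifP; rewrite ?add0r.
  by rewrite -Ev (negPf Hl).
Qed.

Lemma req_nil_of_rep w : rep w = mI -> (forall v, central v -> expsum v w = 0) ->
  req w [::].
Proof.
move=> Hrep Hz; apply: raag_trans (req_central_part w) _.
have Hnc : req (noncentral_part w) [::].
  have [o [h [Hh Hred]]] := reduced_exists (filter_all _ w).
  apply: (raag_trans Hh).
  case: o Hred => [c Hred | /reduced_None->]; last exact: raag_refl.
  have [c' /(_ (1, 0))] := reduced_pingpong Hred.
  rewrite -(rep_req Hh) rep_noncentral_part Hrep /=.
  by rewrite !(mulr0, mulr1, addr0, subr0) oner_eq0 size_poly0 ltn0 => /(_ isT).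
apply: raag_trans (req_catr _ Hnc) _; apply: req_nil_of_commuting => [l1 l2 | v].
- rewrite !mem_filter => /andP[H1 _] /andP[H2 _]; exact: (forallP H1).
- by rewrite expsum_central_part; case: ifP => // /Hz.
Qed.

Lemma wcommute_of_rep x y :
  mmul (rep x) (rep y) = mmul (rep y) (rep x) -> wcommute e x y.
Proof.
move=> Hxy; apply: wcommute_of_commutator; apply: req_nil_of_rep.
- have Hinv z : mmul (rep z) (rep (winv z)) = mI.
    by rewrite -rep_cat (rep_req (req_mulwV e z)) /rep big_nil.
  by rewrite !rep_cat !mmulA Hxy -(mmulA (rep y)) Hinv mmulm1 Hinv.
- by move=> v _; rewrite !expsum_cat !expsum_winv; ring.
Qed.

Lemma raag_comm_transitive : comm_transitive e.
Proof.
move=> x y z [w Hyw] /rep_req Hxy /rep_req Hzy; apply: wcommute_of_rep.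
move: Hxy Hzy; rewrite !rep_cat => Hxy Hzy.
by apply: (mmul_commute_trans _ Hxy Hzy); exists (rep w) => /wcommute_of_rep.
Qed.

End CommutationTransitive.

Section CentraliserChains.
Variables (T : finType) (e : rel T).

Lemma not_centraliser (S : word T -> Prop) w :
  ~ centraliser e S w -> exists2 s, S s & ~ wcommute e w s.
Proof.
move=> Hw; apply: NNPP => Hno; apply: Hw => s Hs.
by apply: NNPP => Hws; apply: Hno; exists s.
Qed.

Lemma has_cent_chain_of k (L W : nat -> word T) :
  (forall i j, i < k -> j < i -> wcommute e (W i) (L j)) ->
  (forall i, i < k -> ~ wcommute e (W i) (L i)) -> has_cent_chain e k.
Proof.
move=> HW HN; exists (fun i s => exists2 j, j < i & s = L j) => i Hi; split.
- by move=> w Hw s [j Hj ->]; apply: Hw; exists j => //; exact: ltnW.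
- exists (W i); split; first by move=> s [j Hj ->]; apply: HW.
  by move/(_ (L i)) => Hc; apply: (HN i Hi); apply: Hc; exists i.
Qed.

Lemma no_cent_chain3 : comm_transitive e -> ~ has_cent_chain e 3.
Proof.
move=> Htrans [S HS].
have [_ [w0 [_ /not_centraliser[s1 Hs1 Hns1]]]] := HS 0 isT.
have [Hsub [u [Hu /not_centraliser[t Ht Hnt]]]] := HS 1 isT.
have [_ [x [Hx /not_centraliser[s3 _ Hns3]]]] := HS 2 isT.
have Hxu : wcommute e x u.
  by apply: (Htrans _ s1) (Hsub x Hx s1 Hs1) (Hu s1 Hs1); exists w0 => /raag_sym.
by apply: Hnt; apply: (Htrans u x t) (raag_sym Hxu) (raag_sym (Hx t Ht)); exists s3.
Qed.

End CentraliserChains.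

Section LongChain.
Variables (T : finType) (e : rel T).
Hypotheses (e_sym : symmetric e) (e_irr : irreflexive e).

Lemma cent_chain4 u v w d : e u v -> e v w -> ~~ adjeq e u w -> ~~ adjeq e v d ->
  has_cent_chain e 4.
Proof.
move=> Huv Hvw Huw Hvd.
have Hvu : e v u by rewrite e_sym.
have Hwv : e w v by rewrite e_sym.
have Hwu : ~~ adjeq e w u by rewrite (adjeq_sym e_sym).
have Hdv : ~~ adjeq e d v by rewrite (adjeq_sym e_sym).
apply: (has_cent_chain_of (L := nth [::] [:: gen v; gen u; gen w; gen d])
                          (W := nth [::] [:: gen d; gen w; gen u; gen v])).
- move=> [|[|[|[|i]]]] // [|[|[|j]]] // _ _; apply: wcommute_gen;
    by rewrite /adjeq ?eqxx ?Huv ?Hvw ?Hvu ?Hwv ?orbT.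
- by move=> [|[|[|[|i]]]] // _; apply: gen_not_wcommute.
Qed.

End LongChain.

Theorem mainTheorem13 (T : finType) (e : rel T) :
  symmetric e -> irreflexive e -> ~ cdim_eq e 3.
Proof.
move=> e_sym e_irr [chain3 chain_max].
have [Htrans | [u [v [w [d [Huv Hvw Huw Hvd]]]]]] := noncentral_transitive_or_path e.
- exact: no_cent_chain3 (raag_comm_transitive e_sym Htrans) chain3.
- by have := chain_max 4 (cent_chain4 e_sym e_irr Huv Hvw Huw Hvd).
Qed.
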